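(* Let $A_1,\dots,A_L$ be independent adjacency matrices generated by a multi-layer SBM (as in the context) satisfying $\frac{\log(L+n)}{pnL^{1/2}}\lesssim\rho\lesssim\frac{1}{pn}$, and let $\tilde A_l$ be the sparsified matrices with sampling probability $p$. Then the following hold simultaneously with probability larger than $1-O((L+n)^{-c})$ for some positive constant $c$: (i) $\max_{l,i}\tilde d_{l,i}\lesssim\log(L+n)$; (ii) $\max_i\sum_{l=1}^L\tilde d_{l,i}\lesssim Ln\rho p$; (iii) $\big\|\sum_{l=1}^L\tilde A_l^2\big\|_2\lesssim Ln\rho/p$.
   Context: Multi-layer SBM: each node $i\in[n]$ has a label $g_i\in[K]$ ($K$ fixed); for each layer $l$, $B_l=\rho B_{l,0}\in[0,1]^{K\times K}$ is symmetric with $B_{l,0}$ having nonnegative entries bounded by an absolute constant. $A_l\in\{0,1\}^{n\times n}$ is symmetric with $A_{l,ii}=0$ and $A_{l,ij}$ ($i<j$) independent $\mathrm{Bernoulli}(B_{l,g_ig_j})$. Sparsification with probability $p\in(0,1]$: for each $l$ and pair $i<j$, independently, with probability $p$ set $\tilde A_{l,ij}=A_{l,ij}/p$, otherwise $0$; $\tilde A_{l,ji}=\tilde A_{l,ij}$, $\tilde A_{l,ii}=0$. $\tilde d_{l,i}=\#\{j:\tilde A_{l,ij}=1/p\}$. $\|\cdot\|_2$ is the spectral norm; $f\lesssim g$ means $f\le cg$ for a constant $c>0$ independent of $n,L,p,\rho$. *)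

From HB Require Import structures.
From mathcomp Require Import all_boot all_order all_algebra.
From mathcomp Require Import all_classical all_reals all_analysis.
Set Implicit Arguments. Unset Strict Implicit. Unset Printing Implicit Defensive.
Import Order.TTheory GRing.Theory Num.Theory.
Local Open Scope classical_set_scope.
Local Open Scope ring_scope.

(* Sample space of the multi-layer SBM + sparsification: for each layer l and
   each ordered triple (l,i,j) a pair (edge bit A_{l,ij}, sampling bit).
   Only triples with i < j are random; the others are a point mass at
   (false,false) and are never read. *)
Definition Omega (L n : nat) := {ffun 'I_L * 'I_n * 'I_n -> bool * bool}.

Definition bern (R : ringType) (q : R) (b : bool) : R := if b then q else 1 - q.

Definition sbm_weight (R : realType) (L n K : nat) (g : 'I_n -> 'I_K)
    (B : 'I_L -> 'M[R]_K) (p : R) (w : Omega L n) : R :=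
  \prod_(t : 'I_L * 'I_n * 'I_n)
     (if (t.1.2 < t.2)%N
      then bern (B t.1.1 (g t.1.2) (g t.2)) (w t).1 * bern p (w t).2
      else ((~~ (w t).1) && ~~ (w t).2)%:R).

Definition sbm_prob (R : realType) (L n K : nat) (g : 'I_n -> 'I_K)
    (B : 'I_L -> 'M[R]_K) (p : R) (E : Omega L n -> bool) : R :=
  \sum_(w : Omega L n) sbm_weight g B p w * (E w)%:R.

Definition adjA (L n : nat) (w : Omega L n) (l : 'I_L) (i j : 'I_n) : bool :=
  if (i < j)%N then (w (l, i, j)).1
  else if (j < i)%N then (w (l, j, i)).1 else false.

Definition maskS (L n : nat) (w : Omega L n) (l : 'I_L) (i j : 'I_n) : bool :=
  if (i < j)%N then (w (l, i, j)).2
  else if (j < i)%N then (w (l, j, i)).2 else false.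

Definition Amat (R : ringType) (L n : nat) (w : Omega L n) (l : 'I_L) : 'M[R]_n :=
  \matrix_(i, j) (adjA w l i j)%:R.

Definition Atilde (R : realType) (L n : nat) (p : R) (w : Omega L n) (l : 'I_L)
  : 'M[R]_n :=
  \matrix_(i, j) (if (i != j) && maskS w l i j then Amat R w l i j / p else 0).

Definition dtilde (R : realType) (L n : nat) (p : R) (w : Omega L n)
  (l : 'I_L) (i : 'I_n) : nat :=
  #|[set j : 'I_n | Atilde p w l i j == p^-1]|.

Definition vnorm (R : realType) (n : nat) (x : 'cV[R]_n) : R :=
  Num.sqrt (\sum_i x i 0 ^+ 2).

Definition spec_norm (R : realType) (n : nat) (A : 'M[R]_n) : R :=
  sup [set vnorm (A *m x) | x in [set x : 'cV[R]_n | vnorm x <= 1]].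

From HB Require Import structures.
From mathcomp Require Import all_boot all_order all_algebra.
From mathcomp Require Import all_classical all_reals all_analysis.
From mathcomp Require Import ring lra.
Set Implicit Arguments. Unset Strict Implicit. Unset Printing Implicit Defensive.
Import Order.TTheory GRing.Theory Num.Theory.
Local Open Scope ring_scope.

(* Let E_l be the 0/1 matrix of the pairs of layer l whose edge is present and
   sampled, so that tilde A_l = E_l / p.  Then tilde d_{l,i} is the degree of i in
   E_l, sum_l tilde d_{l,i} is its total degree D_i over the layers, and
   sum_l tilde A_l^2 is a nonnegative symmetric matrix whose i-th row sum is P_i / p^2,
   where P_i counts the two-step paths from i; by the Schur test its spectral norm is
   at most max_i P_i / p^2.
   The pair indicators are independent Bernoulli variables of means at most rho M p,
   so a sum of m of them has exponential moment at most exp ((e - 1) rho M p m); this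
   controls the degrees (m <= n) and D_i (m <= L n).  A path i - k - j is counted
   through its last edge {k, j}: if that edge touches i the path is charged to D_i,
   otherwise it gets the weight kappa <= 2 of edges from i to k and j, which depends
   only on the pairs at i.  Conditioning on those pairs bounds the exponential moment
   of the remaining sum by exp ((e^2 - 1) rho M p n D_i).  Markov's inequality at the
   thresholds 4 log (L + n) and constant multiples of L n rho p, together with rho p n <= c2
   and c1 log (L + n) <= L n rho p, and a union bound over O((L + n)^2) events, leave
   a failure probability O((L + n)^-2). *)

Lemma expR_ge1 (R : realType) (x : R) : 0 <= x -> 1 <= expR x.
Proof. by move=> x0; rewrite -expR0 ler_expR. Qed.

(** * Product measures on finite function spaces *)

Section ProductMeasure.
Variables (R : realType) (T X : finType) (x0 : X) (mu : T -> X -> R).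
Hypothesis mu_ge0 : forall t x, 0 <= mu t x.
Hypothesis mu_sum1 : forall t, \sum_x mu t x = 1.

Definition pexp (F : {ffun T -> X} -> R) : R :=
  \sum_(w : {ffun T -> X}) (\prod_t mu t (w t)) * F w.
Definition pprob (E : pred {ffun T -> X}) : R := pexp (fun w => (E w)%:R).

Lemma pexp_cst c : pexp (fun=> c) = c.
Proof. by rewrite /pexp -mulr_suml -bigA_distr_bigA big1 ?mul1r. Qed.

Lemma pexpD F G : pexp (fun w => F w + G w) = pexp F + pexp G.
Proof. by rewrite /pexp -big_split; apply: eq_bigr => w _; rewrite mulrDr. Qed.

Lemma pexpN F : pexp (fun w => - F w) = - pexp F.
Proof. by rewrite /pexp -sumrN; apply: eq_bigr => w _; rewrite mulrN. Qed.

Lemma pexp_sum (I : finType) (F : I -> {ffun T -> X} -> R) :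
  pexp (fun w => \sum_i F i w) = \sum_i pexp (F i).
Proof. by rewrite /pexp exchange_big; apply: eq_bigr => w _; rewrite mulr_sumr. Qed.

Lemma pexp_le F G : (forall w, F w <= G w) -> pexp F <= pexp G.
Proof.
move=> FG; apply: ler_sum => w _; apply: ler_wpM2l (FG w).
exact: prodr_ge0.
Qed.

Lemma pexp_le_cst F c : (forall w, F w <= c) -> pexp F <= c.
Proof. by move=> Fc; rewrite -(pexp_cst c); apply: pexp_le. Qed.

Lemma pprobC E : pprob (predC E) = 1 - pprob E.
Proof.
rewrite -(pexp_cst 1) -pexpN -pexpD /pprob; congr pexp; apply: funext => w /=.
by case: (E w); rewrite ?subrr ?subr0.
Qed.

Lemma pprob_le (E E' : pred {ffun T -> X}) :
  (forall w, E w -> E' w) -> pprob E <= pprob E'.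
Proof. by move=> EE'; apply: pexp_le => w; case: (boolP (E w)) => [/EE' -> | _]. Qed.

Lemma pprob_or (E E' : pred {ffun T -> X}) :
  pprob (fun w => E w || E' w) <= pprob E + pprob E'.
Proof.
rewrite -pexpD; apply: pexp_le => w.
by case: (E w); case: (E' w); rewrite /= ?addr0 ?add0r ?lerDl.
Qed.

Lemma pprob_exists (I : finType) (E : I -> pred {ffun T -> X}) :
  pprob (fun w => [exists i, E i w]) <= \sum_i pprob (E i).
Proof.
rewrite -pexp_sum; apply: pexp_le => w.
case: existsP => [[i Ei] | _]; last by apply: sumr_ge0 => i _.
by rewrite (bigD1 i) //= Ei lerDl sumr_ge0.
Qed.

Lemma pprob_le_pexp (E : pred {ffun T -> X}) U :
  (forall w, 0 <= U w) -> (forall w, E w -> 1 <= U w) -> pprob E <= pexp U.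
Proof. by move=> U0 EU; apply: pexp_le => w; case: (boolP (E w)) => [/EU | _]. Qed.

Lemma pprob_gt_le_pexp_expR (f : {ffun T -> X} -> R) a :
  pprob (fun w => a < f w) <= pexp (fun w => expR (f w - a)).
Proof.
apply: pprob_le_pexp => [w | w /ltW af]; first exact: expR_ge0.
by rewrite expR_ge1 // subr_ge0.
Qed.

Definition restrict (S : pred T) (w : {ffun T -> X}) : {ffun T -> X} :=
  [ffun t => if S t then x0 else w t].

Lemma restrictK S w : restrict S (restrict S w) = restrict S w.
Proof. by apply/ffunP => t; rewrite !ffunE; case: (S t). Qed.

Lemma restrictE S a w :
  (restrict S w == a) = (restrict S a == a) && [forall (t | ~~ S t), w t == a t].
Proof.
apply/eqP/andP => [<- | [/eqP ra /forall_inP wa]].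
  by rewrite restrictK; split=> //; apply/forall_inP => t /negbTE nSt; rewrite ffunE nSt.
by rewrite -ra; apply/ffunP => t; rewrite !ffunE; case: ifP => // /negbT /wa /eqP.
Qed.

Lemma sum_restrict_fiber S a (phi : T -> X -> R) : restrict S a = a ->
  \sum_(w | restrict S w == a) \prod_(t | S t) phi t (w t)
  = \prod_(t | S t) \sum_x phi t x.
Proof.
move=> ra; pose psi t x := if S t then phi t x else (x == a t)%:R.
transitivity (\sum_(w : {ffun T -> X}) \prod_t psi t (w t)); last first.
  rewrite -bigA_distr_bigA [LHS](bigID S) /= [X in _ * X]big1 ?mulr1.
    by apply: eq_bigr => t St; rewrite /psi St.
  move=> t /negbTE nSt; rewrite /psi nSt (bigD1 (a t)) //= eqxx big1 ?addr0 //.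
  by move=> x /negbTE ->.
rewrite [RHS](bigID (fun w => restrict S w == a)) /= [X in _ = _ + X]big1 ?addr0.
  apply: eq_bigr => w; rewrite restrictE ra eqxx => /forall_inP wa.
  rewrite [RHS](bigID S) /= [X in _ = _ * X]big1 ?mulr1.
    by apply: eq_bigr => t St; rewrite /psi St.
  by move=> t nSt; rewrite /psi (negbTE nSt) wa.
move=> w; rewrite restrictE ra eqxx /= => /forall_inPn [t nSt nwa].
by rewrite (bigD1 t) //= /psi (negbTE nSt) (negbTE nwa) mul0r.
Qed.

(* Fubini for the product measure: the coordinates in [S] are integrated out
   given the others, which alone determine [F] and [G]. *)
Lemma pexp_indep (S : pred T) (F : {ffun T -> X} -> R)
    (G : T -> {ffun T -> X} -> X -> R) :
  (forall w w' : {ffun T -> X}, (forall t, ~~ S t -> w t = w' t) ->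
     F w = F w' /\ forall t, G t w =1 G t w') ->
  pexp (fun w => F w * \prod_(t | S t) G t w (w t))
  = pexp (fun w => F w * \prod_(t | S t) \sum_x mu t x * G t w x).
Proof.
move=> dep; rewrite /pexp [LHS](partition_big (restrict S) xpredT) //.
rewrite [RHS](partition_big (restrict S) xpredT) //=.
apply: eq_bigr => a _; case: (eqVneq (restrict S a) a) => [ra | nra]; last first.
  by rewrite !big_pred0 // => w; apply: contraNF nra => /eqP <-; rewrite restrictK.
have on_fiber w : restrict S w == a -> [/\ \prod_t mu t (w t) =
    \prod_(t | ~~ S t) mu t (a t) * \prod_(t | S t) mu t (w t),
    F w = F a & forall t, G t w =1 G t a].
  rewrite restrictE ra eqxx => /forall_inP wa.
  have [-> GE] := dep w a (fun t nSt => eqP (wa t nSt)); split=> //.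
  rewrite [LHS](bigID S) /= mulrC; congr (_ * _).
  by apply: eq_bigr => t /wa /eqP ->.
have mass1 : \sum_(w | restrict S w == a) \prod_(t | S t) mu t (w t) = 1.
  by rewrite (sum_restrict_fiber mu ra) big1.
transitivity (F a * \prod_(t | ~~ S t) mu t (a t) *
              \prod_(t | S t) \sum_x mu t x * G t a x).
  rewrite -(sum_restrict_fiber _ ra) !mulr_sumr; apply: eq_bigr => w.
  case/on_fiber => -> -> GE.
  rewrite (eq_bigr (fun t => G t a (w t))) => [|t _]; last exact: GE.
  by rewrite big_split /=; ring.
rewrite -[LHS]mulr1 -[X in _ * X = _]mass1 !mulr_sumr; apply: eq_bigr => w.
case/on_fiber => -> -> GE.
rewrite [X in _ = _ * (F a * X)](eq_bigr (fun t => \sum_x mu t x * G t a x)) => [|t _].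
  by ring.
by apply: eq_bigr => x _; rewrite GE.
Qed.

Lemma expR_mul_bool (k : R) (b : bool) : expR (k * b%:R) = 1 + b%:R * (expR k - 1).
Proof. by case: b; rewrite ?mulr1 ?mulr0 ?mul1r ?mul0r ?expR0 ?addr0 // addrC subrK. Qed.

Lemma pexp_expR_bernoulli_le (S : pred T) (Y : X -> bool) (F : {ffun T -> X} -> R)
    (kap : T -> {ffun T -> X} -> R) :
  (forall w, 0 <= F w) -> (forall t w, 0 <= kap t w) ->
  (forall w w' : {ffun T -> X}, (forall t, ~~ S t -> w t = w' t) ->
     F w = F w' /\ forall t, kap t w = kap t w') ->
  pexp (fun w => F w * expR (\sum_(t | S t) kap t w * (Y (w t))%:R))
  <= pexp (fun w => F w * expR (\sum_(t | S t)
                      (\sum_x mu t x * (Y x)%:R) * (expR (kap t w) - 1))).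
Proof.
move=> F0 kap0 dep.
under [X in pexp X]funext do rewrite expR_sum.
rewrite (pexp_indep (G := fun t w x => expR (kap t w * (Y x)%:R))); last first.
  by move=> w w' /dep [-> kapE]; split=> // t x; rewrite kapE.
apply: pexp_le => w; rewrite expR_sum; apply: ler_wpM2l; first exact: F0.
apply: ler_prod => t _; set q := \sum_x mu t x * (Y x)%:R.
have q0 : 0 <= q by apply: sumr_ge0 => x _; apply: mulr_ge0.
have -> : \sum_x mu t x * expR (kap t w * (Y x)%:R) = 1 + q * (expR (kap t w) - 1).
  under eq_bigr do rewrite expR_mul_bool mulrDr mulr1 mulrA.
  by rewrite big_split /= mu_sum1 mulr_suml.
by rewrite expR_ge1Dx andbT addr_ge0 // mulr_ge0 // subr_ge0 expR_ge1.
Qed.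

End ProductMeasure.

(** * Counting kept edges *)

Section Graph.
Local Open Scope nat_scope.
Variables (L n : nat).
Local Notation T := ('I_L * 'I_n * 'I_n)%type.
Implicit Types (w : Omega L n) (l : 'I_L) (i j k : 'I_n) (t : T).

Definition upper t : bool := t.1.2 < t.2.
Definition touches i t : bool := (t.1.2 == i) || (t.2 == i).
Definition kept (x : bool * bool) : bool := x.1 && x.2.
Definition edge w l i j : bool := adjA w l i j && maskS w l i j.

Definition deg w l i : nat := \sum_j edge w l i j.
Definition mdeg w i : nat := \sum_l deg w l i.
Definition paths2 w i : nat := \sum_l \sum_k \sum_j edge w l i k * edge w l k j.
(* [kappa w i (l, x, y)] counts the first steps i - x and i - y of the two-step
   paths of layer [l] from [i] whose last edge is {x, y}. *)
Definition kappa w i t : nat := edge w t.1.1 i t.1.2 + edge w t.1.1 i t.2.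

Definition mdeg_coords i : pred T := fun t => upper t && touches i t.
Definition deg_coords l i : pred T := fun t => mdeg_coords i t && (t.1.1 == l).
Definition far_coords i : pred T := fun t => upper t && ~~ touches i t.

Lemma sum_ltn_sym (h : 'I_n -> 'I_n -> nat) :
  \sum_(x : 'I_n) \sum_(y : 'I_n | x < y) (h x y + h y x)
  = \sum_(x : 'I_n) \sum_(y | x != y) h x y.
Proof.
under eq_bigr do rewrite big_split /=.
rewrite big_split /= [X in _ + X](exchange_big_dep xpredT) //= -big_split /=.
apply: eq_bigr => x _; rewrite [RHS](bigID (fun y : 'I_n => x < y)) /=.
by congr (_ + _); apply: eq_bigl => y; rewrite -val_eqE /=; case: ltngtP.
Qed.

Lemma edge_sym w l i j : edge w l i j = edge w l j i.
Proof. by rewrite /edge /adjA /maskS; case: ltngtP. Qed.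

Lemma edge_diag w l i : edge w l i i = false.
Proof. by rewrite /edge /adjA ltnn. Qed.

Lemma edge_upper w l i j : i < j -> edge w l i j = kept (w (l, i, j)).
Proof. by rewrite /edge /adjA /maskS => ->. Qed.

Lemma sum_triples (F : T -> nat) :
  \sum_t F t = \sum_l \sum_x \sum_y F (l, x, y).
Proof.
rewrite (eq_bigr (fun t => F (t.1, t.2))) => [|[]//].
rewrite -(pair_bigA _ (fun a y => F (a, y))) /=.
rewrite (eq_bigr (fun a => \sum_y F ((a.1, a.2), y))) => [|[]//].
by rewrite -(pair_bigA _ (fun l x => \sum_y F ((l, x), y))).
Qed.

Lemma sum_edges w (G : 'I_L -> 'I_n -> 'I_n -> nat) :
  \sum_l \sum_k \sum_j G l k j * edge w l k j
   = \sum_(t | upper t) (G t.1.1 t.1.2 t.2 + G t.1.1 t.2 t.1.2) * kept (w t).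
Proof.
rewrite [RHS]big_mkcond [RHS]sum_triples /=; apply: eq_bigr => l _.
transitivity (\sum_(x : 'I_n) \sum_(y : 'I_n | x < y)
                (G l x y * edge w l x y + G l y x * edge w l y x)).
  rewrite sum_ltn_sym; apply: eq_bigr => x _.
  rewrite [LHS](bigD1 x) //= edge_diag muln0 add0n.
  by apply: eq_bigl => y; rewrite eq_sym.
apply: eq_bigr => x _; rewrite big_mkcond; apply: eq_bigr => y _.
by rewrite /upper /=; case: ltnP => // xy; rewrite (edge_sym w l y) !edge_upper // mulnDl.
Qed.

Lemma sum_weighted_deg w i (a : 'I_L -> nat) :
  \sum_l a l * deg w l i = \sum_(t | mdeg_coords i t) a t.1.1 * kept (w t).
Proof.
transitivity (\sum_l \sum_k \sum_j a l * (k == i) * edge w l k j).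
  apply: eq_bigr => l _; rewrite [RHS](bigD1 i) //= [X in _ = _ + X]big1 => [|k /negbTE ki].
    by rewrite addn0 big_distrr; apply: eq_bigr => j _; rewrite eqxx muln1.
  by apply: big1 => j _; rewrite ki muln0.
rewrite sum_edges /mdeg_coords big_mkcondr; apply: eq_bigr => -[[l x] y] /=.
rewrite /upper /touches /= => xy.
case: eqP => [xi | _]; case: eqP => [yi | _]; rewrite ?muln1 ?muln0 ?addn0 //.
by move: xy; rewrite xi yi ltnn.
Qed.

Lemma degE w l i : deg w l i = \sum_(t | deg_coords l i t) kept (w t).
Proof.
transitivity (\sum_l' (l' == l) * deg w l' i).
  by rewrite (bigD1 l) //= eqxx mul1n big1 ?addn0 // => l' /negbTE ->.
rewrite sum_weighted_deg /deg_coords [RHS]big_mkcondr; apply: eq_bigr => t _.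
by case: (t.1.1 == l); rewrite ?mul1n.
Qed.

Lemma mdegE w i : mdeg w i = \sum_(t | mdeg_coords i t) kept (w t).
Proof.
rewrite /mdeg (eq_bigr (fun l => 1 * deg w l i)) => [|l _]; last by rewrite mul1n.
by rewrite (sum_weighted_deg _ _ (fun=> 1)); apply: eq_bigr => t _; rewrite mul1n.
Qed.

Lemma deg_le w l i : deg w l i <= n.
Proof.
rewrite -[n in _ <= n]card_ord -sum1_card; apply: leq_sum => j _; exact: leq_b1.
Qed.

Lemma mdeg_le w i : mdeg w i <= L * n.
Proof.
rewrite -[L in _ <= L * _]card_ord -sum_nat_const; apply: leq_sum => l _.
exact: deg_le.
Qed.

(* Under [all_kept] a kept-edge count is the number of coordinates it reads. *)
Definition all_kept : Omega L n := [ffun=> (true, true)].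

Lemma card_deg_coords l i : #|deg_coords l i| <= n.
Proof.
apply: leq_trans (deg_le all_kept l i); rewrite degE -sum1_card.
by apply/eq_leq/eq_big => // t _; rewrite ffunE.
Qed.

Lemma card_mdeg_coords i : #|mdeg_coords i| <= L * n.
Proof.
apply: leq_trans (mdeg_le all_kept i); rewrite mdegE -sum1_card.
by apply/eq_leq/eq_big => // t _; rewrite ffunE.
Qed.

Lemma paths2E w i : paths2 w i = \sum_(t | upper t) kappa w i t * kept (w t).
Proof. exact: sum_edges. Qed.

Lemma paths2_le w i :
  paths2 w i <= mdeg w i + \sum_(t | far_coords i t) kappa w i t * kept (w t).
Proof.
rewrite paths2E mdegE (bigID (touches i)) /= leq_add2r.
apply: leq_sum => -[[l x] y] /andP[_ /orP tch].
have kappa_le1 : kappa w i (l, x, y) <= 1.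
  by rewrite /kappa; case: tch => /eqP /= ->; rewrite edge_diag ?addn0 leq_b1.
by case: (kept _); rewrite ?muln1 ?muln0.
Qed.

Lemma sum_kappa_far w i : \sum_(t | far_coords i t) kappa w i t <= n * mdeg w i.
Proof.
apply: (@leq_trans (\sum_(t | upper t) kappa w i t)).
  by rewrite [X in _ <= X](bigID (touches i)) /= leq_addl.
rewrite big_mkcond sum_triples /mdeg /deg big_distrr /=; apply: leq_sum => l _.
pose S := \sum_(x : 'I_n) \sum_(y : 'I_n | x < y) (edge w l i x + edge w l i y).
apply: (@leq_trans S).
  apply/eq_leq; apply: eq_bigr => x _; rewrite [RHS]big_mkcond; apply: eq_bigr => y _.
  by rewrite /upper /kappa.
rewrite /S sum_ltn_sym big_distrr /=; apply: leq_sum => x _.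
apply: (@leq_trans (\sum_(y : 'I_n) edge w l i x)).
  by rewrite [X in _ <= X](bigID (fun y => x != y)) /= leq_addr.
by rewrite sum_nat_const card_ord.
Qed.

Lemma kappa_le2 w i t : kappa w i t <= 2.
Proof. by rewrite /kappa; case: edge; case: edge. Qed.

Lemma edge_local w w' i : (forall t, touches i t -> w t = w' t) ->
  forall l k, edge w l i k = edge w' l i k.
Proof.
move=> ww' l k; rewrite /edge /adjA /maskS; case: ifP => ik.
  by rewrite (ww' (l, i, k)) // /touches eqxx.
by case: ifP => // ki; rewrite (ww' (l, k, i)) // /touches eqxx orbT.
Qed.

Lemma mdeg_local w w' i : (forall t, touches i t -> w t = w' t) -> mdeg w i = mdeg w' i.
Proof.
by move=> ww'; apply: eq_bigr => l _; apply: eq_bigr => j _; rewrite (edge_local ww').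
Qed.

Lemma kappa_local w w' i : (forall t, touches i t -> w t = w' t) ->
  forall t, kappa w i t = kappa w' i t.
Proof. by move=> ww' t; rewrite /kappa !(edge_local ww'). Qed.

End Graph.

(** * The sparsified multilayer SBM *)

Lemma sum_bool_pair (V : nmodType) (F : bool * bool -> V) :
  \sum_x F x = F (true, true) + F (true, false) + F (false, true) + F (false, false).
Proof.
rewrite (eq_bigr (fun x => F (x.1, x.2))) => [|[]//].
by rewrite -(pair_bigA _ (fun a b => F (a, b))) /= !big_bool /= addrA.
Qed.

Lemma expR_nat_sub1_le (R : realType) (k : nat) :
  (k <= 2)%N -> expR k%:R - 1 <= (expR 2 - 1) * k%:R :> R.
Proof.
have e1 : 1 <= expR (1 : R) by rewrite expR_ge1.
have e2 : expR 1 <= expR (2 : R) by rewrite ler_expR ler1n.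
by case: k => [|[|[|]]] //= _; rewrite ?expR0 ?mulr0 ?subrr // ?mulr1; lra.
Qed.

Section SBM.
Variables (R : realType) (L n K : nat) (g : 'I_n -> 'I_K) (B : 'I_L -> 'M[R]_K).
Variables (p bmax : R).
Local Notation T := ('I_L * 'I_n * 'I_n)%type.

Definition sbm_mu (t : T) (x : bool * bool) : R :=
  if upper t then bern (B t.1.1 (g t.1.2) (g t.2)) x.1 * bern p x.2
  else ((~~ x.1) && ~~ x.2)%:R.

Lemma sbm_probE E : sbm_prob g B p E = pprob sbm_mu E.
Proof. by []. Qed.

Hypothesis B01 : forall l a b, 0 <= B l a b <= 1.
Hypothesis p01 : 0 <= p <= 1.
Hypothesis B_le : forall l a b, B l a b <= bmax.
Hypothesis bmax_ge0 : 0 <= bmax.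

Lemma sbm_mu_ge0 t x : 0 <= sbm_mu t x.
Proof.
rewrite /sbm_mu; case: (upper t) => //; apply: mulr_ge0; rewrite /bern.
  by case/andP: (B01 t.1.1 (g t.1.2) (g t.2)); case: ifP; rewrite // subr_ge0.
by case/andP: p01; case: ifP; rewrite // subr_ge0.
Qed.

Lemma sbm_mu_sum1 t : \sum_x sbm_mu t x = 1.
Proof. by rewrite sum_bool_pair /sbm_mu; case: (upper t) => /=; [ring | rewrite !add0r]. Qed.

Lemma sbm_kept_le t : \sum_x sbm_mu t x * (kept x)%:R <= bmax * p.
Proof.
have [B0 _] := andP (B01 t.1.1 (g t.1.2) (g t.2)); have [p0 _] := andP p01.
rewrite sum_bool_pair /sbm_mu /kept /bern /=; case: (upper t) => /=.
  by rewrite !mulr0 !addr0 mulr1 ler_wpM2r // B_le.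
by rewrite !mulr0 !addr0 mul0r mulr_ge0 // (le_trans B0 (B_le _ _ _)).
Qed.

Lemma pexp_expR_kept_le (S : pred T) a :
  pexp sbm_mu (fun w => expR ((\sum_(t | S t) kept (w t))%:R - a))
  <= expR ((expR 1 - 1) * (bmax * p) * #|S|%:R - a).
Proof.
have -> : (fun w : Omega L n => expR ((\sum_(t | S t) kept (w t))%:R - a))
    = fun w => expR (- a) * expR (\sum_(t | S t) 1 * (kept (w t))%:R).
  apply: funext => w; rewrite natr_sum -expRD addrC.
  by under [in RHS]eq_bigr do rewrite mul1r.
apply: le_trans (pexp_expR_bernoulli_le (false, false) sbm_mu_ge0 sbm_mu_sum1 kept _ _ _) _.
- by move=> w; apply: expR_ge0.
- by move=> t w; apply: ler01.
- by [].
apply: (pexp_le_cst sbm_mu_ge0 sbm_mu_sum1) => w.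
rewrite -expRD addrC ler_expR lerD2r.
apply: le_trans (_ : \sum_(t | S t) bmax * p * (expR 1 - 1) <= _).
  apply: ler_sum => t _; apply: ler_wpM2r; last exact: sbm_kept_le.
  by rewrite subr_ge0 expR_ge1.
by rewrite sumr_const -[X in X <= _]mulr_natr (mulrC (bmax * p)).
Qed.

Lemma mgf_rate_ge0 x : 0 <= x -> 0 <= (expR x - 1) * (bmax * p).
Proof. by move=> x0; rewrite !mulr_ge0 ?subr_ge0 ?expR_ge1 //; case/andP: p01. Qed.

Lemma deg_tail l i a :
  pprob sbm_mu (fun w => a < (deg w l i)%:R)
  <= expR ((expR 1 - 1) * (bmax * p) * n%:R - a).
Proof.
apply: le_trans (pprob_gt_le_pexp_expR sbm_mu_ge0 _ _) _.
under [X in pexp _ X]funext do rewrite degE.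
apply: le_trans (pexp_expR_kept_le _ _) _.
by rewrite ler_expR lerD2r ler_wpM2l ?ler_nat ?card_deg_coords ?mgf_rate_ge0.
Qed.

Lemma mdeg_tail i a :
  pprob sbm_mu (fun w => a < (mdeg w i)%:R)
  <= expR ((expR 1 - 1) * (bmax * p) * (L%:R * n%:R) - a).
Proof.
apply: le_trans (pprob_gt_le_pexp_expR sbm_mu_ge0 _ _) _.
under [X in pexp _ X]funext do rewrite mdegE.
apply: le_trans (pexp_expR_kept_le _ _) _.
by rewrite ler_expR lerD2r ler_wpM2l -?natrM ?ler_nat ?card_mdeg_coords ?mgf_rate_ge0.
Qed.

Lemma pexp_expR_far_le i a b :
  pexp sbm_mu (fun w => (((mdeg w i)%:R <= a)%R)%:R * expR (- b) *
    expR (\sum_(t | far_coords i t) (kappa w i t)%:R * (kept (w t))%:R))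
  <= expR ((expR 2 - 1) * (bmax * p) * (n%:R * a) - b).
Proof.
apply: le_trans (pexp_expR_bernoulli_le (false, false) sbm_mu_ge0 sbm_mu_sum1 kept _ _ _) _.
- by move=> w; rewrite mulr_ge0 ?expR_ge0.
- by move=> t w; rewrite ler0n.
- move=> w w' ww'; have loc t : touches i t -> w t = w' t.
    by move=> ti; apply: ww'; rewrite /far_coords ti andbF.
  by rewrite (mdeg_local loc); split=> // t; rewrite (kappa_local loc).
apply: (pexp_le_cst sbm_mu_ge0 sbm_mu_sum1) => w.
case: (boolP ((mdeg w i)%:R <= a)) => [mdeg_a | _]; last by rewrite !mul0r expR_ge0.
rewrite mul1r -expRD addrC ler_expR lerD2r.
apply: le_trans (_ : \sum_(t | far_coords i t)
    bmax * p * ((expR 2 - 1) * (kappa w i t)%:R) <= _).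
  apply: ler_sum => t _; apply: ler_pM.
  - by apply: sumr_ge0 => x _; rewrite mulr_ge0 ?sbm_mu_ge0.
  - by rewrite subr_ge0 expR_ge1.
  - exact: sbm_kept_le.
  - by rewrite expR_nat_sub1_le ?kappa_le2.
have sum_kappa : \sum_(t | far_coords i t) (kappa w i t)%:R <= n%:R * a.
  rewrite -natr_sum; apply: le_trans (_ : (n * mdeg w i)%:R <= _).
    by rewrite ler_nat sum_kappa_far.
  by rewrite natrM ler_wpM2l.
by rewrite -!mulr_sumr mulrA (mulrC (bmax * p)) ler_wpM2l ?mgf_rate_ge0.
Qed.

Lemma paths2_tail i a b :
  pprob sbm_mu (fun w => ((mdeg w i)%:R <= a) && (a + b < (paths2 w i)%:R))
  <= expR ((expR 2 - 1) * (bmax * p) * (n%:R * a) - b).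
Proof.
apply: le_trans (pprob_le_pexp sbm_mu_ge0 _ _) (pexp_expR_far_le i a b).
  by move=> w; rewrite !mulr_ge0 ?expR_ge0.
move=> w /andP [mdeg_a paths2_ab]; rewrite mdeg_a mul1r -expRD.
under eq_bigr do rewrite -natrM.
have := paths2_le w i; rewrite -(ler_nat R) natrD -natr_sum => paths2_far.
by rewrite expR_ge1 //; lra.
Qed.

Definition sbm_bad (ta tb tc : R) (w : Omega L n) : bool :=
  [|| [exists l, exists i, ta < (deg w l i)%:R],
      [exists i, tb < (mdeg w i)%:R]
    | [exists i, ((mdeg w i)%:R <= tb) && (tb + tc < (paths2 w i)%:R)]].

Lemma sbm_bad_prob ta tb tc :
  pprob sbm_mu (sbm_bad ta tb tc)
  <= L%:R * (n%:R * expR ((expR 1 - 1) * (bmax * p) * n%:R - ta))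
   + n%:R * expR ((expR 1 - 1) * (bmax * p) * (L%:R * n%:R) - tb)
   + n%:R * expR ((expR 2 - 1) * (bmax * p) * (n%:R * tb) - tc).
Proof.
have sum_tails (I : finType) (Ev : I -> pred (Omega L n)) c :
    (forall i, pprob sbm_mu (Ev i) <= c) ->
    pprob sbm_mu (fun w => [exists i, Ev i w]) <= #|I|%:R * c.
  move=> Evc; apply: le_trans (pprob_exists sbm_mu_ge0 _) _.
  by rewrite mulr_natl -sumr_const; apply: ler_sum => i _.
apply: le_trans (pprob_or sbm_mu_ge0 _ _) _; rewrite -addrA lerD //.
  apply: le_trans (sum_tails _ _ _ (fun l => sum_tails _ _ _ (fun i => deg_tail l i ta))) _.
  by rewrite !card_ord.
apply: le_trans (pprob_or sbm_mu_ge0 _ _) _; rewrite lerD //.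
  by apply: le_trans (sum_tails _ _ _ (fun i => mdeg_tail i tb)) _; rewrite card_ord.
by apply: le_trans (sum_tails _ _ _ (fun i => paths2_tail i tb tc)) _; rewrite card_ord.
Qed.
End SBM.

(** * Spectral norm of the sum of squared sparsified matrices *)

(* Expand [\sum_(j, k) m j * m k * (y j - y k) ^+ 2 >= 0]. *)
Lemma sum_mul_sqr_le (R : realFieldType) (I : finType) (m y : I -> R) :
  (forall j, 0 <= m j) ->
  (\sum_j m j * y j) ^+ 2 <= (\sum_j m j) * \sum_j m j * y j ^+ 2.
Proof.
move=> m0.
have sqrE : (\sum_j m j * y j) ^+ 2 = \sum_j \sum_k m j * m k * (y j * y k).
  rewrite expr2 mulr_suml; apply: eq_bigr => j _; rewrite mulr_sumr.
  by apply: eq_bigr => k _; ring.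
have prodE : (\sum_j m j) * (\sum_j m j * y j ^+ 2) = \sum_j \sum_k m j * m k * y k ^+ 2.
  rewrite mulr_suml; apply: eq_bigr => j _; rewrite mulr_sumr.
  by apply: eq_bigr => k _; ring.
have prod_symE : \sum_j \sum_k m j * m k * y k ^+ 2 = \sum_j \sum_k m j * m k * y j ^+ 2.
  by rewrite exchange_big; apply: eq_bigr => j _; apply: eq_bigr => k _; ring.
have twice (z : R) : 2 * z = z + z by ring.
rewrite sqrE prodE -(ler_pM2l (_ : 0 < 2)) // [X in _ <= X]twice.
rewrite [X in _ <= _ + X]prod_symE -big_split [X in X <= _]twice -big_split /=.
apply: ler_sum => j _; rewrite -!big_split; apply: ler_sum => k _ /=.
have := mulr_ge0 (mulr_ge0 (m0 j) (m0 k)) (sqr_ge0 (y j - y k)); nra.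
Qed.

Lemma spec_norm_le_row_sum (R : realType) (n : nat) (A : 'M[R]_n) r :
  (forall i j, 0 <= A i j) -> (forall i j, A i j = A j i) ->
  (forall i, \sum_j A i j <= r) -> 0 <= r -> spec_norm A <= r.
Proof.
move=> A0 Asym Ar r0; apply: ge_sup.
  exists (vnorm (A *m 0)), 0 => //=.
  by rewrite /vnorm big1 ?sqrtr0 // => i _; rewrite mxE expr0n.
move=> _ [x x1 <-]; rewrite /vnorm.
have sx0 : 0 <= \sum_i x i 0 ^+ 2 by apply: sumr_ge0 => i _; apply: sqr_ge0.
have sx1 : \sum_i x i 0 ^+ 2 <= 1 by rewrite -ler_sqrt // sqrtr1; exact: x1.
rewrite -(ger0_norm r0) -sqrtr_sqr ler_sqrt ?sqr_ge0 //.
apply: le_trans (_ : \sum_i r * \sum_j A i j * x j 0 ^+ 2 <= _).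
  apply: ler_sum => i _; rewrite mxE.
  apply: le_trans (sum_mul_sqr_le (fun j => x j 0) (A0 i)) _.
  by rewrite ler_wpM2r ?Ar // sumr_ge0 // => j _; rewrite mulr_ge0 ?sqr_ge0.
rewrite -mulr_sumr exchange_big /= expr2 ler_wpM2l //.
apply: le_trans (_ : \sum_j r * x j 0 ^+ 2 <= _).
  apply: ler_sum => j _; rewrite -mulr_suml ler_wpM2r ?sqr_ge0 //.
  by under eq_bigr do rewrite Asym; apply: Ar.
by rewrite -mulr_sumr ler_piMr.
Qed.

Section Sparsified.
Variables (R : realType) (L n : nat) (p : R).
Hypothesis p_neq0 : p != 0.

Lemma Atilde_edge (w : Omega L n) l i j : Atilde p w l i j = (edge w l i j)%:R / p.
Proof.
rewrite /Atilde /Amat !mxE; case: (eqVneq i j) => [<- | _] /=.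
  by rewrite edge_diag mul0r.
by rewrite /edge; case: (maskS w l i j); rewrite ?andbT ?andbF ?mul0r.
Qed.

Lemma dtilde_deg (w : Omega L n) l i : dtilde p w l i = deg w l i.
Proof.
rewrite /dtilde /deg -sum1_card big_mkcond; apply: eq_bigr => j _.
have -> : (j \in [set j | Atilde p w l i j == p^-1]%classic) = (Atilde p w l i j == p^-1).
  by apply/idP/idP; rewrite in_setE.
rewrite Atilde_edge; case: (edge w l i j); first by rewrite mul1r eqxx.
by rewrite mul0r eq_sym invr_eq0 (negbTE p_neq0).
Qed.

Lemma sum_Atilde_sqrE (w : Omega L n) i j :
  (\sum_l Atilde p w l *m Atilde p w l) i j
  = (\sum_l \sum_k edge w l i k * edge w l k j)%:R / p ^+ 2.
Proof.
rewrite summxE natr_sum mulr_suml; apply: eq_bigr => l _.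
rewrite mxE natr_sum mulr_suml; apply: eq_bigr => k _.
by rewrite !Atilde_edge natrM expr2 invfM mulrACA.
Qed.

Lemma spec_norm_sum_Atilde_sqr_le (w : Omega L n) r :
  0 <= r -> (forall i, (paths2 w i)%:R <= r) ->
  spec_norm (\sum_l Atilde p w l *m Atilde p w l) <= r / p ^+ 2.
Proof.
move=> r0 paths2_r; have p2 : 0 < p ^+ 2 by rewrite exprn_even_gt0.
apply: spec_norm_le_row_sum => [i j | i j | i |]; rewrite ?sum_Atilde_sqrE.
- by rewrite divr_ge0 ?sqr_ge0.
- congr (_%:R / _); apply: eq_bigr => l _; apply: eq_bigr => k _.
  by rewrite mulnC (edge_sym w l i) (edge_sym w l k).
- under eq_bigr do rewrite sum_Atilde_sqrE.
  rewrite -mulr_suml -natr_sum ler_pM2r ?invr_gt0 //; apply: le_trans (paths2_r i).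
  by rewrite ler_nat /paths2 exchange_big; apply/eq_leq/eq_bigr => l _; rewrite exchange_big.
- by rewrite divr_ge0 ?sqr_ge0.
Qed.

Lemma sbm_event_of_not_bad (w : Omega L n) (ta tb tc x y z : R) :
  ~~ sbm_bad ta tb tc w -> ta <= x -> tb <= y -> 0 <= tb + tc ->
  (tb + tc) / p ^+ 2 <= z ->
  [&& [forall l : 'I_L, [forall i : 'I_n, (dtilde p w l i)%:R <= x]],
      [forall i : 'I_n, (\sum_(l < L) dtilde p w l i)%:R <= y] &
      spec_norm (\sum_(l < L) (Atilde p w l *m Atilde p w l)) <= z].
Proof.
rewrite /sbm_bad !negb_or => /and3P [/existsPn deg_ok /existsPn mdeg_ok /existsPn paths2_ok].
have mdeg_tb i : (mdeg w i)%:R <= tb by rewrite leNgt mdeg_ok.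
move=> ta_x tb_y tbc0 tbc_z; apply/and3P; split.
- apply/forallP => l; apply/forallP => i; rewrite dtilde_deg; apply: le_trans ta_x.
  by move/existsPn: (deg_ok l) => /(_ i); rewrite -leNgt.
- apply/forallP => i; apply: le_trans tb_y.
  by rewrite (eq_bigr _ (fun l _ => dtilde_deg w l i)); apply: mdeg_tb.
apply: le_trans tbc_z; apply: spec_norm_sum_Atilde_sqr_le => // i.
by move: (paths2_ok i); rewrite mdeg_tb -leNgt.
Qed.

End Sparsified.

(** * Choice of the constants *)

Lemma mul_expR_le (R : realType) (k x y z : R) :
  0 <= k -> k <= expR x -> y <= z - x -> k * expR y <= expR z.
Proof.
move=> k0 kx yz; apply: le_trans (ler_wpM2r (expR_ge0 _) kx) _.
by rewrite -expRD ler_expR; lra.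
Qed.

Lemma sbm_rates (R : realType) (c1 c2 : R) (L n : nat) (p rho : R) :
  (0 < L)%N -> (0 < n)%N -> 0 < p -> 0 < c1 ->
  c1 * ln (L + n)%:R / (p * n%:R * Num.sqrt L%:R) <= rho ->
  rho <= c2 / (p * n%:R) ->
  [/\ 0 < rho, rho * (p * n%:R) <= c2 & c1 * ln (L + n)%:R <= L%:R * n%:R * rho * p].
Proof.
move=> L0 n0 p0 c10 rho_lo rho_hi.
have ell0 : 0 < ln (L + n)%:R :> R by rewrite ln_gt0 // ltr1n -addn1 leq_add.
have sqrtL1 : 1 <= Num.sqrt L%:R :> R by rewrite -[X in X <= _]sqrtr1 ler_sqrt // ler1n.
have sqrtL_le : Num.sqrt L%:R <= L%:R :> R.
  rewrite -{2}(sqr_sqrtr (ler0n _ L)) expr2 ler_peMr ?sqrtr_ge0 //.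
have pn0 : 0 < p * n%:R by rewrite mulr_gt0 ?ltr0n.
have den0 : 0 < p * n%:R * Num.sqrt L%:R by rewrite mulr_gt0 // (lt_le_trans ltr01).
have rho0 : 0 < rho by apply: lt_le_trans rho_lo; rewrite divr_gt0 // mulr_gt0.
split=> //; first by rewrite -ler_pdivlMr.
move: rho_lo; rewrite ler_pdivrMr // => /le_trans; apply.
have -> : L%:R * n%:R * rho * p = rho * (p * n%:R * L%:R) by ring.
by rewrite !ler_wpM2l // ltW.
Qed.

Section Rates.
Variables (R : realType) (M c1 c2 : R).
Hypotheses (M_gt0 : 0 < M) (c1_gt0 : 0 < c1) (c2_gt0 : 0 < c2).

(* The [3 / c1] terms push the tail exponents below [- 3 * ln (L + n)], because
   [c1 * ln (L + n) <= L * n * rho * p]. *)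
Definition mdeg_const : R := (expR 1 - 1) * M + 3 / c1.
Definition paths2_const : R := (expR 2 - 1) * M * c2 * mdeg_const + 3 / c1.
Definition fail_const : R := expR ((expR 1 - 1) * M * c2) + 2.

Lemma mdeg_const_gt0 : 0 < mdeg_const.
Proof. by rewrite ltr_wpDl ?divr_gt0 // mulr_ge0 ?ltW // subr_ge0 expR_ge1. Qed.

Lemma paths2_const_gt0 : 0 < paths2_const.
Proof.
by rewrite ltr_wpDl ?divr_gt0 // !mulr_ge0 ?ltW ?mdeg_const_gt0 // subr_ge0 expR_ge1.
Qed.

Lemma sbm_tails_le (L n : nat) (p rho : R) :
  (0 < L + n)%N -> 0 <= rho -> 0 <= p -> rho * (p * n%:R) <= c2 ->
  c1 * ln (L + n)%:R <= L%:R * n%:R * rho * p ->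
  L%:R * (n%:R * expR ((expR 1 - 1) * (rho * M * p) * n%:R - 4 * ln (L + n)%:R))
  + n%:R * expR ((expR 1 - 1) * (rho * M * p) * (L%:R * n%:R)
                 - mdeg_const * (L%:R * n%:R * rho * p))
  + n%:R * expR ((expR 2 - 1) * (rho * M * p) * (n%:R * (mdeg_const * (L%:R * n%:R * rho * p)))
                 - paths2_const * (L%:R * n%:R * rho * p))
  <= fail_const * powR (L + n)%:R (-2).
Proof.
move=> Ln0 rho0 p0 rate_hi rate_lo.
set N := (L + n)%:R; set ell := ln N; set Lam := L%:R * n%:R * rho * p.
have N0 : 0 < N by rewrite ltr0n.
have n_le : n%:R <= expR ell by rewrite lnK ?posrE // ler_nat leq_addl.
have Ln_le : L%:R * n%:R <= expR (2 * ell).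
  have -> : 2 * ell = ell + ell by ring.
  by rewrite expRD lnK ?posrE // /N -!natrM ler_nat leq_mul ?leq_addr ?leq_addl.
have ell_Lam : 3 * ell <= 3 / c1 * Lam.
  by rewrite -mulrA ler_wpM2l // mulrC ler_pdivlMr // mulrC.
have e1 : 0 <= expR 1 - 1 :> R by rewrite subr_ge0 expR_ge1.
have e2 : 0 <= expR 2 - 1 :> R by rewrite subr_ge0 expR_ge1.
have M0 := ltW M_gt0.
have -> : fail_const * powR N (-2)
    = expR ((expR 1 - 1) * M * c2 - 2 * ell) + expR (- (2 * ell)) + expR (- (2 * ell)).
  by rewrite /fail_const /powR gt_eqF // expRD mulNr -/ell; ring.
rewrite mulrA; apply: lerD; first apply: lerD.
- apply: mul_expR_le Ln_le _; first exact: mulr_ge0.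
  have := ler_wpM2l (mulr_ge0 e1 M0) rate_hi.
  have -> : (expR 1 - 1) * (rho * M * p) * n%:R
      = (expR 1 - 1) * M * (rho * (p * n%:R)) by ring.
  lra.
- apply: mul_expR_le n_le _ => //.
  have -> : (expR 1 - 1) * (rho * M * p) * (L%:R * n%:R) - mdeg_const * Lam = - (3 / c1 * Lam).
    by rewrite /mdeg_const /Lam; ring.
  lra.
- apply: mul_expR_le n_le _ => //.
  pose k := (expR 2 - 1) * M * mdeg_const * Lam.
  have k0 : 0 <= k by rewrite /k /Lam !mulr_ge0 // ltW ?mdeg_const_gt0.
  have := ler_wpM2l k0 rate_hi.
  have -> : (expR 2 - 1) * (rho * M * p) * (n%:R * (mdeg_const * Lam)) - paths2_const * Lam
      = k * (rho * (p * n%:R)) - k * c2 - 3 / c1 * Lam by rewrite /k /paths2_const; ring.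
  lra.
Qed.
End Rates.

Lemma sbm_event_prob_ge (R : realType) (L n K : nat) (g : 'I_n -> 'I_K)
    (B : 'I_L -> 'M[R]_K) (p bmax ta tb tc x y z : R) :
  (forall l a b, 0 <= B l a b <= 1) -> 0 < p <= 1 ->
  (forall l a b, B l a b <= bmax) -> 0 <= bmax ->
  ta <= x -> tb <= y -> 0 <= tb + tc -> (tb + tc) / p ^+ 2 <= z ->
  1 - (L%:R * (n%:R * expR ((expR 1 - 1) * (bmax * p) * n%:R - ta))
       + n%:R * expR ((expR 1 - 1) * (bmax * p) * (L%:R * n%:R) - tb)
       + n%:R * expR ((expR 2 - 1) * (bmax * p) * (n%:R * tb) - tc))
  <= sbm_prob g B p (fun w =>
       [&& [forall l : 'I_L, [forall i : 'I_n, (dtilde p w l i)%:R <= x]],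
           [forall i : 'I_n, (\sum_(l < L) dtilde p w l i)%:R <= y] &
           spec_norm (\sum_(l < L) (Atilde p w l *m Atilde p w l)) <= z]).
Proof.
move=> B01 /andP [p0 p1] B_le bmax0 ta_x tb_y tbc0 tbc_z.
have p01 : 0 <= p <= 1 by rewrite ltW.
rewrite sbm_probE; apply: le_trans (pprob_le (sbm_mu_ge0 g B01 p01)
  (E := predC (sbm_bad ta tb tc)) _).
  by rewrite pprobC ?lerB ?sbm_bad_prob //; apply: sbm_mu_sum1.
by move=> w /(sbm_event_of_not_bad (lt0r_neq0 p0)); apply.
Qed.

Theorem lemma1 :
  forall (R : realType) (K : nat) (M c1 c2 : R),
    0 < M -> 0 < c1 -> 0 < c2 ->
  exists C C0 c : R, [/\ 0 < C, 0 < C0, 0 < c &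
  forall (n L : nat) (p rho : R) (g : 'I_n -> 'I_K) (B0 : 'I_L -> 'M[R]_K),
    (0 < n)%N -> (0 < L)%N -> 0 < p -> p <= 1 ->
    (forall l, (B0 l)^T = B0 l) ->
    (forall l a b, 0 <= B0 l a b <= M) ->
    (forall l a b, 0 <= rho * B0 l a b <= 1) ->
    c1 * ln (L + n)%:R / (p * n%:R * Num.sqrt L%:R) <= rho ->
    rho <= c2 / (p * n%:R) ->
    1 - C0 * powR (L + n)%:R (- c) <=
    sbm_prob g (fun l => rho *: B0 l) p (fun w =>
      [&& [forall l : 'I_L, [forall i : 'I_n,
             (dtilde p w l i)%:R <= C * ln (L + n)%:R]],
          [forall i : 'I_n,
             (\sum_(l < L) dtilde p w l i)%:R <= C * (L%:R * n%:R * rho * p)] &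
          spec_norm (\sum_(l < L) (Atilde p w l *m Atilde p w l))
             <= C * (L%:R * n%:R * rho / p)])].
Proof.
move=> R K M c1 c2 M0 c10 c20.
have Cm0 := mdeg_const_gt0 M0 c10; have Cp0 := paths2_const_gt0 M0 c10 c20.
pose C := 4 + mdeg_const M c1 + paths2_const M c1 c2.
exists C, (fail_const M c2), 2; split=> //; first by rewrite /C; lra.
  by rewrite addr_gt0 ?expR_gt0.
move=> n L p rho g B0 n0 L0 p0 p1 _ B0M rhoB hlo hhi.
have [rho0 rate_hi rate_lo] := sbm_rates L0 n0 p0 c10 hlo hhi.
have ell0 : 0 <= ln (L + n)%:R :> R by rewrite ln_ge0 // ler1n addn_gt0 n0 orbT.
set Lam := L%:R * n%:R * rho * p.
have Lam0 : 0 <= Lam by rewrite /Lam !mulr_ge0 ?ler0n ?ltW.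
have B_le l a b : (rho *: B0 l) a b <= rho * M.
  by rewrite mxE ler_pM2l //; case/andP: (B0M l a b).
have LamE : L%:R * n%:R * rho / p = Lam / p ^+ 2.
  by rewrite /Lam expr2 invfM mulrA mulfK ?gt_eqF.
apply: le_trans (sbm_event_prob_ge (ta := 4 * ln (L + n)%:R)
  (tb := mdeg_const M c1 * Lam) (tc := paths2_const M c1 c2 * Lam) _ _ _ B_le _ _ _ _ _).
- rewrite lerB //.
  exact (sbm_tails_le M0 c10 (ltn_addr n L0) (ltW rho0) (ltW p0) rate_hi rate_lo).
- by move=> l a b; rewrite mxE; apply: rhoB.
- by rewrite p0.
- by rewrite mulr_ge0 ?ltW.
- by apply: ler_wpM2r => //; rewrite /C; lra.
- by apply: ler_wpM2r => //; rewrite /C; lra.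
- by rewrite -mulrDl mulr_ge0 // addr_ge0 ?ltW.
rewrite LamE mulrA -mulrDl; apply: ler_wpM2r; first by rewrite invr_ge0 exprn_ge0 ?ltW.
by apply: ler_wpM2r => //; rewrite /C; lra.
Qed.
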